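(* Let $\bar F,\bar G\in C^1([a,b],\mathbb{R}_\mathcal{I})$. Then $$\bar F(b)\bar G(b)-\bar F(a)\bar G(a)=(IR)\int_a^b\bar F'(t)\bar G(t)\,dt+(IR)\int_a^b\bar F(t)\bar G'(t)\,dt.$$
   Context: An interval number is a closed interval $\bar a=[a_l,a_r]$ with $a_l<a_r$ real; $\mathbb{R}_\mathcal{I}$ is the set of interval numbers. Write $a_c=(a_l+a_r)/2$, $a_w=(a_r-a_l)/2>0$, $\bar a=\langle a_c;a_w\rangle=[a_c-a_w,a_c+a_w]$. Operations: $\bar a+\bar b=\langle a_c+b_c;a_wb_w\rangle$, $\bar a-\bar b=\langle a_c-b_c;a_w/b_w\rangle$, $k\bar a=\langle ka_c;a_w^k\rangle$ for real $k$, $\bar a\bar b=\langle a_cb_c;e^{\ln a_w\ln b_w}\rangle$; for real $h\ne0$, $\bar c/h=\langle c_c/h;c_w^{1/h}\rangle$. Distance $d(\bar a,\bar b)=\sqrt{(a_c-b_c)^2+(\ln a_w-\ln b_w)^2}$; continuity and limits w.r.t. $d$. Derivative: $\bar F'(x)=\lim_{h\to0}\frac{\bar F(x+h)-\bar F(x)}{h}$; $C^1([a,b],\mathbb{R}_\mathcal{I})$ is the set of interval-valued functions on $[a,b]$ that are differentiable on $[a,b]$ with continuous derivative. Products of interval-valued functions are pointwise. Interval Riemann integral: $\bar A=(IR)\int_a^b\bar f$ if for every $\varepsilon>0$ there is $\delta>0$ such that for every partition $a=t_0<\dots<t_n=b$ with mesh $<\delta$ and tags $\xi_i\in[t_{i-1},t_i]$,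 $d(\sum_i(t_i-t_{i-1})\bar f(\xi_i),\bar A)<\varepsilon$. *)

From Stdlib Require Import Reals Lra.
Open Scope R_scope.

(* An interval number <a_c ; a_w> = [a_c - a_w, a_c + a_w], with a_w > 0. *)
Record Inum : Type := mkI { ic : R; iw : R; iw_pos : 0 < iw }.

Definition iadd (a b : Inum) : Inum :=
  mkI (ic a + ic b) (iw a * iw b) (Rmult_lt_0_compat _ _ (iw_pos a) (iw_pos b)).

Definition isub (a b : Inum) : Inum :=
  mkI (ic a - ic b) (iw a / iw b) (Rdiv_lt_0_compat _ _ (iw_pos a) (iw_pos b)).

Definition iscal (k : R) (a : Inum) : Inum :=
  mkI (k * ic a) (Rpower (iw a) k) (exp_pos _).

Definition imul (a b : Inum) : Inum :=
  mkI (ic a * ic b) (exp (ln (iw a) * ln (iw b))) (exp_pos _).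

Definition idivr (c : Inum) (h : R) : Inum :=
  mkI (ic c / h) (Rpower (iw c) (1 / h)) (exp_pos _).

Definition izero : Inum := mkI 0 1 Rlt_0_1.

Definition idist (a b : Inum) : R :=
  sqrt ((ic a - ic b) ^ 2 + (ln (iw a) - ln (iw b)) ^ 2).

Definition is_ideriv_on (a b : R) (F : R -> Inum) (x : R) (D : Inum) : Prop :=
  forall eps, 0 < eps -> exists delta, 0 < delta /\
    forall h, h <> 0 -> Rabs h < delta -> a <= x + h <= b ->
      idist (idivr (isub (F (x + h)) (F x)) h) D < eps.

Definition icont_on (a b : R) (f : R -> Inum) : Prop :=
  forall x, a <= x <= b -> forall eps, 0 < eps -> exists delta, 0 < delta /\
    forall y, a <= y <= b -> Rabs (y - x) < delta -> idist (f y) (f x) < eps.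

Definition iC1 (a b : R) (F F' : R -> Inum) : Prop :=
  (forall x, a <= x <= b -> is_ideriv_on a b F x (F' x)) /\ icont_on a b F'.

Fixpoint rsum (f : R -> Inum) (t xi : nat -> R) (n : nat) : Inum :=
  match n with
  | O => izero
  | S m => iadd (rsum f t xi m) (iscal (t (S m) - t m) (f (xi (S m))))
  end.

Definition is_IRint (f : R -> Inum) (a b : R) (A : Inum) : Prop :=
  forall eps, 0 < eps -> exists delta, 0 < delta /\
    forall (n : nat) (t xi : nat -> R),
      t O = a -> t n = b ->
      (forall i, (i < n)%nat -> t i < t (S i) /\ t (S i) - t i < delta) ->
      (forall i, (1 <= i <= n)%nat -> t (pred i) <= xi i <= t i) ->
      idist (rsum f t xi n) A < eps.

From Stdlib Require Import Reals Lra Lia ProofIrrelevance.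
From Coquelicot Require Import Coquelicot.
Open Scope R_scope.

(* In the coordinates (a_c, ln a_w) the interval operations become the real ones and the
   distance d becomes the Euclidean one, so R_I is isometrically R^2 and derivatives and
   Riemann sums are taken componentwise. The theorem is therefore integration by parts for
   real Riemann sums, applied to both coordinates. That in turn follows from the mean value
   theorem and uniform continuity (Riemann sums of U' tend to U b - U a); one-sided notions
   on [a, b] are turned into two-sided ones on R by composing with a clamp onto [a, b]. *)

Definition is_rderiv_on (a b : R) (f : R -> R) (x d : R) : Prop :=
  forall eps, 0 < eps -> exists delta, 0 < delta /\
    forall h, h <> 0 -> Rabs h < delta -> a <= x + h <= b ->
      Rabs ((f (x + h) - f x) / h - d) < eps.

Definition rcont_on (a b : R) (f : R -> R) : Prop :=
  forall x, a <= x <= b -> forall eps, 0 < eps -> exists delta, 0 < delta /\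
    forall y, a <= y <= b -> Rabs (y - x) < delta -> Rabs (f y - f x) < eps.

Section Clamp.

Variables a b : R.

Definition clamp (x : R) : R := Rmax a (Rmin b x).

Lemma clamp_lipschitz x y : Rabs (clamp y - clamp x) <= Rabs (y - x).
Proof.
  unfold clamp, Rmax, Rmin; repeat destruct Rle_dec;
  unfold Rabs; repeat destruct Rcase_abs; lra.
Qed.

Lemma continuity_pt_clamp x : continuity_pt clamp x.
Proof.
  intros eps Heps; exists eps; split; [lra|].
  intros y [_ Hy]; simpl in *; unfold R_dist in *.
  eapply Rle_lt_trans; [apply clamp_lipschitz | exact Hy].
Qed.

Hypothesis Hab : a <= b.

Lemma clamp_id x : a <= x <= b -> clamp x = x.
Proof. intros H; unfold clamp, Rmax, Rmin; repeat destruct Rle_dec; lra. Qed.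

Lemma clamp_in x : a <= clamp x <= b.
Proof. unfold clamp, Rmax, Rmin; repeat destruct Rle_dec; lra. Qed.

Lemma rcont_on_clamp f x : rcont_on a b f -> continuity_pt (fun y => f (clamp y)) x.
Proof.
  intros Hf eps Heps.
  destruct (Hf (clamp x) (clamp_in x) eps Heps) as [d [Hd Hy]].
  exists d; split; [lra|]. intros y [_ Hyx]; simpl in *; unfold R_dist in *.
  apply Hy; [apply clamp_in|].
  eapply Rle_lt_trans; [apply clamp_lipschitz | exact Hyx].
Qed.

Lemma rcont_on_of_clamp f :
  (forall x, a <= x <= b -> continuity_pt (fun y => f (clamp y)) x) -> rcont_on a b f.
Proof.
  intros Hf x Hx eps Heps.
  destruct (Hf x Hx eps Heps) as [d [Hd Hy]].
  exists d; split; [lra|]. intros y Hy' Hyx.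
  specialize (Hy y). simpl in Hy; unfold R_dist, D_x, no_cond in Hy.
  rewrite !clamp_id in Hy by assumption.
  destruct (Req_dec x y) as [<-|Hne].
  - rewrite Rminus_diag, Rabs_R0; lra.
  - apply Hy; auto.
Qed.

Lemma rcont_on_plus f g : rcont_on a b f -> rcont_on a b g -> rcont_on a b (fun x => f x + g x).
Proof.
  intros Hf Hg; apply rcont_on_of_clamp; intros x _.
  apply (continuity_pt_plus (fun y => f (clamp y)) (fun y => g (clamp y)));
    apply rcont_on_clamp; assumption.
Qed.

Lemma rcont_on_mult f g : rcont_on a b f -> rcont_on a b g -> rcont_on a b (fun x => f x * g x).
Proof.
  intros Hf Hg; apply rcont_on_of_clamp; intros x _.
  apply (continuity_pt_mult (fun y => f (clamp y)) (fun y => g (clamp y)));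
    apply rcont_on_clamp; assumption.
Qed.

End Clamp.

Lemma is_rderiv_on_rcont_on a b f f' :
  (forall x, a <= x <= b -> is_rderiv_on a b f x (f' x)) -> rcont_on a b f.
Proof.
  intros Hf x Hx eps Heps.
  destruct (Hf x Hx 1 Rlt_0_1) as [d [Hd Hh]].
  set (K := Rabs (f' x) + 1).
  assert (HK : 0 < K) by (pose proof (Rabs_pos (f' x)); unfold K; lra).
  exists (Rmin d (eps / K)); split; [apply Rmin_pos; [|apply Rdiv_lt_0_compat]; lra|].
  intros y Hy Hyx.
  pose proof (Rmin_l d (eps / K)); pose proof (Rmin_r d (eps / K)).
  destruct (Req_dec y x) as [->|Hne].
  { rewrite Rminus_diag, Rabs_R0; lra. }
  specialize (Hh (y - x) ltac:(lra) ltac:(lra) ltac:(replace (x + (y - x)) with y by ring; lra)).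
  replace (x + (y - x)) with y in Hh by ring.
  set (q := (f y - f x) / (y - x)) in Hh.
  assert (Hq : Rabs q <= K).
  { pose proof (Rabs_triang (q - f' x) (f' x)).
    replace (q - f' x + f' x) with q in * by ring. unfold K; lra. }
  replace (f y - f x) with ((y - x) * q) by (unfold q; field; lra).
  rewrite Rabs_mult.
  apply Rle_lt_trans with (Rabs (y - x) * K).
  - apply Rmult_le_compat_l; [apply Rabs_pos | exact Hq].
  - replace eps with (eps / K * K) by (field; lra).
    apply Rmult_lt_compat_r; lra.
Qed.

Lemma is_rderiv_on_interior a b f x d :
  a < x < b -> is_rderiv_on a b f x d -> derivable_pt_lim f x d.
Proof.
  intros Hx Hf eps Heps.
  destruct (Hf eps Heps) as [del [Hd Hh]].
  set (r := Rmin del (Rmin (x - a) (b - x))).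
  assert (Hr : 0 < r) by (apply Rmin_pos; [|apply Rmin_pos]; lra).
  exists (mkposreal r Hr); intros h Hh0 Hhr; simpl in Hhr.
  pose proof (Rmin_l del (Rmin (x - a) (b - x))); pose proof (Rmin_r del (Rmin (x - a) (b - x))).
  pose proof (Rmin_l (x - a) (b - x)); pose proof (Rmin_r (x - a) (b - x)).
  apply Rabs_def2 in Hhr as Hh'.
  apply Hh; unfold r in *; lra.
Qed.

Fixpoint rsumR (f : R -> R) (t xi : nat -> R) (n : nat) : R :=
  match n with
  | O => 0
  | S m => rsumR f t xi m + (t (S m) - t m) * f (xi (S m))
  end.

Definition tagged_partition (a b delta : R) (n : nat) (t xi : nat -> R) : Prop :=
  t O = a /\ t n = b /\
  (forall i, (i < n)%nat -> t i < t (S i) /\ t (S i) - t i < delta) /\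
  (forall i, (1 <= i <= n)%nat -> t (pred i) <= xi i <= t i).

Definition is_RRint (f : R -> R) (a b I : R) : Prop :=
  forall eps, 0 < eps -> exists delta, 0 < delta /\
    forall n t xi, tagged_partition a b delta n t xi -> Rabs (rsumR f t xi n - I) < eps.

Lemma tagged_partition_le a b d d' n t xi :
  d <= d' -> tagged_partition a b d n t xi -> tagged_partition a b d' n t xi.
Proof.
  intros Hd (H0 & Hn & Hm & Ht); split; [|split; [|split]]; auto.
  intros i Hi; destruct (Hm i Hi); split; lra.
Qed.

Lemma tagged_partition_bounds a b d n t xi k :
  tagged_partition a b d n t xi -> (k <= n)%nat -> a <= t k <= b.
Proof.
  intros (H0 & Hn & Hm & _) Hk; subst a b.
  assert (Hmono : forall i j, (i <= j <= n)%nat -> t i <= t j).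
  { intros i j [Hij Hjn]; induction Hij; [lra|].
    destruct (Hm m ltac:(lia)); specialize (IHHij ltac:(lia)); lra. }
  split; apply Hmono; lia.
Qed.

Section RiemannSumsOfDerivative.

Variables (a b : R) (U w : R -> R).
Hypothesis Hab : a < b.
Hypothesis HUd : forall x, a < x < b -> is_derive U x (w x).
Hypothesis HUc : rcont_on a b U.

Lemma rsumR_step_error s s' x e :
  a <= s < s' -> s' <= b -> s <= x <= s' ->
  (forall y, s <= y <= s' -> Rabs (w x - w y) < e) ->
  Rabs ((s' - s) * w x - (U s' - U s)) <= e * (s' - s).
Proof.
  intros Hs Hs' Hx Hw.
  destruct (MVT_gen (fun y => U (clamp a b y)) s s' w) as [c [Hc Hmvt]];
    cbv zeta in *; rewrite Rmin_left, Rmax_right in * by lra.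
  - intros y Hy; apply is_derive_ext_loc with U; [|apply HUd; lra].
    apply (locally_interval _ y a b); simpl; try lra.
    intros z Hz1 Hz2; rewrite clamp_id; lra.
  - intros y _; apply rcont_on_clamp; [lra | exact HUc].
  - rewrite !clamp_id in Hmvt by lra; rewrite Hmvt.
    replace ((s' - s) * w x - w c * (s' - s)) with ((s' - s) * (w x - w c)) by ring.
    rewrite Rabs_mult, Rabs_pos_eq by lra.
    rewrite Rmult_comm; apply Rmult_le_compat_r; [lra|].
    apply Rlt_le, Hw; lra.
Qed.

Hypothesis Hwc : rcont_on a b w.

(* Uniform continuity of w makes each Riemann term match the MVT increment of U up to
   e times the subinterval length; the errors telescope to e (b - a). *)
Lemma is_RRint_derive : is_RRint w a b (U b - U a).
Proof.
  intros eps Heps.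
  set (e := eps / (2 * (b - a))).
  assert (He : 0 < e) by (apply Rdiv_lt_0_compat; lra).
  destruct (Heine (fun y => w (clamp a b y)) _ (compact_P3 a b)
              (fun x _ => rcont_on_clamp a b ltac:(lra) w x Hwc) (mkposreal e He))
    as [del Hdel].
  exists del; split; [apply cond_pos|].
  intros n t xi P.
  pose proof P as (H0 & Hn & Hm & Ht).
  assert (Hacc : forall k, (k <= n)%nat ->
            Rabs (rsumR w t xi k - (U (t k) - U a)) <= e * (t k - a)).
  { induction k as [|k IH]; intros Hk; simpl.
    - rewrite H0; replace (0 - (U a - U a)) with 0 by ring; rewrite Rabs_R0; lra.
    - destruct (Hm k ltac:(lia)) as [Hlt Hmesh].
      destruct (Ht (S k) ltac:(lia)) as [Hx1 Hx2]; simpl in Hx1.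
      pose proof (tagged_partition_bounds _ _ _ _ _ _ k P ltac:(lia)).
      pose proof (tagged_partition_bounds _ _ _ _ _ _ (S k) P Hk).
      assert (Hstep := rsumR_step_error (t k) (t (S k)) (xi (S k)) e
                         ltac:(lra) ltac:(lra) ltac:(lra)).
      specialize (IH ltac:(lia)).
      assert (Hw : forall y, t k <= y <= t (S k) -> Rabs (w (xi (S k)) - w y) < e).
      { intros y Hy; specialize (Hdel (xi (S k)) y ltac:(lra) ltac:(lra)).
        rewrite !clamp_id in Hdel by lra; apply Hdel; apply Rabs_def1; lra. }
      specialize (Hstep Hw).
      replace (rsumR w t xi k + (t (S k) - t k) * w (xi (S k)) - (U (t (S k)) - U a))
        with ((rsumR w t xi k - (U (t k) - U a))
              + ((t (S k) - t k) * w (xi (S k)) - (U (t (S k)) - U (t k)))) by ring.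
      eapply Rle_trans; [apply Rabs_triang | lra]. }
  specialize (Hacc n (le_n n)); rewrite Hn in Hacc.
  replace (e * (b - a)) with (eps / 2) in Hacc by (unfold e; field; lra).
  lra.
Qed.


End RiemannSumsOfDerivative.

(* The antiderivative is taken of the clamped extension, which is continuous on all of R. *)
Lemma ex_is_RRint_rcont_on a b v : a < b -> rcont_on a b v -> exists I, is_RRint v a b I.
Proof.
  intros Hab Hv.
  set (vc := fun y => v (clamp a b y)).
  assert (Hvc : forall x, continuous vc x).
  { intros x; apply continuity_pt_filterlim, rcont_on_clamp; [lra | exact Hv]. }
  set (U := fun x => RInt vc a x).
  assert (HU : forall x, is_derive U x (vc x)).
  { intros x; apply (is_derive_RInt vc U a); [|apply Hvc].
    apply filter_forall; intros y; apply (RInt_correct vc a y).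
    apply ex_RInt_continuous; intros; apply Hvc. }
  exists (U b - U a); apply is_RRint_derive; auto.
  - intros x Hx; unfold vc in HU; rewrite <- (clamp_id a b ltac:(lra) x) at 2 by lra; apply HU.
  - apply (rcont_on_of_clamp a b ltac:(lra)); intros x _.
    apply (continuity_pt_comp (clamp a b) U); [apply continuity_pt_clamp|].
    apply continuity_pt_filterlim, (ex_derive_continuous (V := R_NormedModule) U).
    eexists; apply HU.
Qed.

Lemma rsumR_ext f g t xi n : (forall x, f x = g x) -> rsumR f t xi n = rsumR g t xi n.
Proof. intros H; induction n; simpl; [reflexivity|]; rewrite IHn, H; reflexivity. Qed.

Lemma rsumR_plus f g t xi n :
  rsumR (fun x => f x + g x) t xi n = rsumR f t xi n + rsumR g t xi n.
Proof. induction n; simpl; [ring|]; rewrite IHn; ring. Qed.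

Lemma is_RRint_ext f g a b I : (forall x, f x = g x) -> is_RRint f a b I -> is_RRint g a b I.
Proof.
  intros E H eps Heps; destruct (H eps Heps) as [d [Hd Hs]].
  exists d; split; auto; intros n t xi P; rewrite <- (rsumR_ext f g); auto.
Qed.

Lemma is_RRint_common_mesh f g a b I J eps :
  is_RRint f a b I -> is_RRint g a b J -> 0 < eps ->
  exists delta, 0 < delta /\ forall n t xi, tagged_partition a b delta n t xi ->
    Rabs (rsumR f t xi n - I) < eps /\ Rabs (rsumR g t xi n - J) < eps.
Proof.
  intros Hf Hg Heps.
  destruct (Hf eps Heps) as [d1 [Hd1 Hs1]]; destruct (Hg eps Heps) as [d2 [Hd2 Hs2]].
  exists (Rmin d1 d2); split; [apply Rmin_pos; auto|].
  intros n t xi P; split;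
    [apply Hs1 | apply Hs2]; eapply tagged_partition_le; eauto;
    [apply Rmin_l | apply Rmin_r].
Qed.

Lemma is_RRint_minus f g a b I J :
  is_RRint (fun x => f x + g x) a b I -> is_RRint f a b J -> is_RRint g a b (I - J).
Proof.
  intros Hfg Hf eps Heps.
  destruct (is_RRint_common_mesh _ _ _ _ _ _ (eps / 2) Hfg Hf ltac:(lra))
    as [d [Hd Hs]].
  exists d; split; auto; intros n t xi P.
  destruct (Hs n t xi P) as [H1 H2]; rewrite rsumR_plus in H1.
  replace (rsumR g t xi n - (I - J))
    with ((rsumR f t xi n + rsumR g t xi n - I) - (rsumR f t xi n - J)) by ring.
  eapply Rle_lt_trans; [apply Rabs_triang|]; rewrite Rabs_Ropp; lra.
Qed.

Lemma is_RRint_parts a b f f' g g' : a < b ->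
  (forall x, a <= x <= b -> is_rderiv_on a b f x (f' x)) ->
  (forall x, a <= x <= b -> is_rderiv_on a b g x (g' x)) ->
  rcont_on a b f' -> rcont_on a b g' ->
  exists I, is_RRint (fun x => f' x * g x) a b I /\
    is_RRint (fun x => f x * g' x) a b (f b * g b - f a * g a - I).
Proof.
  intros Hab Hf Hg Hf' Hg'.
  assert (Hfc := is_rderiv_on_rcont_on _ _ _ _ Hf).
  assert (Hgc := is_rderiv_on_rcont_on _ _ _ _ Hg).
  assert (Hab' : a <= b) by lra.
  destruct (ex_is_RRint_rcont_on a b (fun x => f' x * g x) Hab)
    as [I HI]; [apply rcont_on_mult; auto|].
  exists I; split; auto.
  apply (is_RRint_minus (fun x => f' x * g x)); auto.
  apply (is_RRint_derive a b (fun x => f x * g x)); auto.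
  - intros x Hx; apply is_derive_Reals, derivable_pt_lim_mult;
      apply (is_rderiv_on_interior a b); auto; [apply Hf | apply Hg]; lra.
  - apply rcont_on_mult; auto.
  - apply rcont_on_plus; try apply rcont_on_mult; auto.
Qed.

Definition ilw (x : Inum) : R := ln (iw x).

Definition inum_of (c l : R) : Inum := mkI c (exp l) (exp_pos l).

Lemma ilw_inum_of c l : ilw (inum_of c l) = l.
Proof. apply ln_exp. Qed.

Lemma ilw_iadd x y : ilw (iadd x y) = ilw x + ilw y.
Proof. apply ln_mult; apply iw_pos. Qed.

Lemma ilw_isub x y : ilw (isub x y) = ilw x - ilw y.
Proof. apply ln_div; apply iw_pos. Qed.

Lemma ilw_iscal k x : ilw (iscal k x) = k * ilw x.
Proof. apply ln_exp. Qed.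

Lemma ilw_imul x y : ilw (imul x y) = ilw x * ilw y.
Proof. apply ln_exp. Qed.

Lemma ilw_idivr x h : ilw (idivr x h) = ilw x / h.
Proof. unfold ilw; simpl; unfold Rpower; rewrite ln_exp; unfold Rdiv; ring. Qed.

Lemma Inum_ext x y : ic x = ic y -> ilw x = ilw y -> x = y.
Proof.
  destruct x as [cx wx Hx], y as [cy wy Hy]; unfold ilw; simpl; intros -> Hl.
  apply ln_inv in Hl; auto; subst wy.
  f_equal; apply proof_irrelevance.
Qed.

Lemma Rabs_le_sqrt_sum_sq x y : Rabs x <= sqrt (x ^ 2 + y ^ 2).
Proof.
  rewrite <- (sqrt_pow2 (Rabs x)) by apply Rabs_pos.
  apply sqrt_le_1_alt; rewrite pow2_abs; nra.
Qed.

Lemma sqrt_sum_sq_lt x y e : Rabs x < e / 2 -> Rabs y < e / 2 -> sqrt (x ^ 2 + y ^ 2) < e.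
Proof.
  intros Hx Hy.
  pose proof (Rabs_pos x); pose proof (Rabs_pos y).
  rewrite <- (sqrt_pow2 e) by lra.
  apply sqrt_lt_1_alt; split; [nra|].
  rewrite <- (pow2_abs x), <- (pow2_abs y); nra.
Qed.

Lemma ic_le_idist x y : Rabs (ic x - ic y) <= idist x y.
Proof. apply Rabs_le_sqrt_sum_sq. Qed.

Lemma ilw_le_idist x y : Rabs (ilw x - ilw y) <= idist x y.
Proof. unfold idist; rewrite Rplus_comm; apply Rabs_le_sqrt_sum_sq. Qed.

Lemma ic_rsum f t xi n : ic (rsum f t xi n) = rsumR (fun x => ic (f x)) t xi n.
Proof. induction n; simpl; [reflexivity|]; rewrite IHn; reflexivity. Qed.

Lemma ilw_rsum f t xi n : ilw (rsum f t xi n) = rsumR (fun x => ilw (f x)) t xi n.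
Proof.
  induction n; simpl; [apply ln_1|].
  rewrite ilw_iadd, ilw_iscal, IHn; reflexivity.
Qed.

Lemma is_IRint_coords f a b c l :
  is_RRint (fun x => ic (f x)) a b c -> is_RRint (fun x => ilw (f x)) a b l ->
  is_IRint f a b (inum_of c l).
Proof.
  intros Hc Hl eps Heps.
  destruct (is_RRint_common_mesh _ _ _ _ _ _ (eps / 2) Hc Hl ltac:(lra)) as [d [Hd Hs]].
  exists d; split; auto; intros n t xi H0 Hn Hm Ht.
  destruct (Hs n t xi (conj H0 (conj Hn (conj Hm Ht)))) as [H1 H2].
  apply sqrt_sum_sq_lt; [rewrite ic_rsum; exact H1|].
  change (Rabs (ilw (rsum f t xi n) - ilw (inum_of c l)) < eps / 2).
  rewrite ilw_rsum, ilw_inum_of; exact H2.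
Qed.

Lemma is_ideriv_on_ic a b F x D :
  is_ideriv_on a b F x D -> is_rderiv_on a b (fun y => ic (F y)) x (ic D).
Proof.
  intros H eps Heps; destruct (H eps Heps) as [d [Hd Hh]].
  exists d; split; auto; intros h Hh0 Hha Hin.
  change ((ic (F (x + h)) - ic (F x)) / h) with (ic (idivr (isub (F (x + h)) (F x)) h)).
  eapply Rle_lt_trans; [apply ic_le_idist | exact (Hh h Hh0 Hha Hin)].
Qed.

Lemma is_ideriv_on_ilw a b F x D :
  is_ideriv_on a b F x D -> is_rderiv_on a b (fun y => ilw (F y)) x (ilw D).
Proof.
  intros H eps Heps; destruct (H eps Heps) as [d [Hd Hh]].
  exists d; split; auto; intros h Hh0 Hha Hin.
  eapply Rle_lt_trans; [|exact (Hh h Hh0 Hha Hin)].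
  rewrite <- ilw_isub, <- ilw_idivr; apply ilw_le_idist.
Qed.

Lemma icont_on_ic a b F : icont_on a b F -> rcont_on a b (fun y => ic (F y)).
Proof.
  intros H x Hx eps Heps; destruct (H x Hx eps Heps) as [d [Hd Hy]].
  exists d; split; auto; intros y Hy' Hyx.
  eapply Rle_lt_trans; [apply ic_le_idist | exact (Hy y Hy' Hyx)].
Qed.

Lemma icont_on_ilw a b F : icont_on a b F -> rcont_on a b (fun y => ilw (F y)).
Proof.
  intros H x Hx eps Heps; destruct (H x Hx eps Heps) as [d [Hd Hy]].
  exists d; split; auto; intros y Hy' Hyx.
  eapply Rle_lt_trans; [apply ilw_le_idist | exact (Hy y Hy' Hyx)].
Qed.

Theorem theorem5p11 (a b : R) (F F' G G' : R -> Inum) :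
  a < b -> iC1 a b F F' -> iC1 a b G G' ->
  exists A1 A2 : Inum,
    is_IRint (fun t => imul (F' t) (G t)) a b A1 /\
    is_IRint (fun t => imul (F t) (G' t)) a b A2 /\
    isub (imul (F b) (G b)) (imul (F a) (G a)) = iadd A1 A2.
Proof.
  intros Hab [HdF HcF] [HdG HcG].
  destruct (is_RRint_parts a b (fun y => ic (F y)) (fun y => ic (F' y))
              (fun y => ic (G y)) (fun y => ic (G' y)) Hab) as [Ic [H1c H2c]];
    try (intros; apply is_ideriv_on_ic; auto); try apply icont_on_ic; auto.
  destruct (is_RRint_parts a b (fun y => ilw (F y)) (fun y => ilw (F' y))
              (fun y => ilw (G y)) (fun y => ilw (G' y)) Hab) as [Il [H1l H2l]];
    try (intros; apply is_ideriv_on_ilw; auto); try apply icont_on_ilw; auto.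
  exists (inum_of Ic Il),
    (inum_of (ic (F b) * ic (G b) - ic (F a) * ic (G a) - Ic)
             (ilw (F b) * ilw (G b) - ilw (F a) * ilw (G a) - Il)).
  split; [|split].
  - apply is_IRint_coords; [exact H1c|].
    apply (is_RRint_ext _ _ _ _ _ (fun t => eq_sym (ilw_imul (F' t) (G t))) H1l).
  - apply is_IRint_coords; [exact H2c|].
    apply (is_RRint_ext _ _ _ _ _ (fun t => eq_sym (ilw_imul (F t) (G' t))) H2l).
  - apply Inum_ext; simpl; [ring|].
    rewrite ilw_iadd, ilw_isub, !ilw_imul, !ilw_inum_of; ring.
Qed.
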